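(* Let $G$ be a finite group and $H \le G$ a subgroup with $H \neq \{e\}$. Let $C_{\min}$ be a non-identity conjugacy class of $G$ of minimal size among the non-identity conjugacy classes that intersect $H$ non-trivially. Then \[ |H|^{-1}|C_{\min}|^{-1} < D_H \le (|H|-1)\,|C_{\min}|^{-1/2}. \]
   Context: For a finite group $G$, let $\mathrm{Irr}(G)$ be its set of complex irreducible characters and $d_\chi=\chi(e)$. For $H \le G$ let $D_H = \frac{1}{|G|}\sum_{\chi \in \mathrm{Irr}(G)} d_\chi \big|\sum_{h \in H, h \neq e}\chi(h)\big|$, the $L_1$ distance between the distributions $P_H(\chi)=\frac{d_\chi}{|G|}\sum_{h\in H}\chi(h)$ and $P_{\{e\}}$ on $\mathrm{Irr}(G)$. *)

From mathcomp Require Import all_boot all_order all_algebra all_fingroup all_solvable all_field all_character.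
Set Implicit Arguments. Unset Strict Implicit. Unset Printing Implicit Defensive.
Import GRing.Theory Num.Theory.
Local Open Scope ring_scope.

Definition DH (gT : finGroupType) (G H : {group gT}) : algC :=
  (#|G|%:R)^-1 * \sum_(i : Iirr G) 'chi[G]_i 1%g * `| \sum_(h in (H^#)%g) 'chi[G]_i h |.

From mathcomp Require Import all_boot all_order all_algebra all_fingroup all_solvable all_field all_character.
Set Implicit Arguments. Unset Strict Implicit. Unset Printing Implicit Defensive.
Import Order.TTheory GRing.Theory Num.Theory.
Local Open Scope ring_scope.

(* Both bounds come from the second orthogonality relation.  For the upper
   bound, the column of the character table at h has squared norm
   |C_G(h)| = |G| / |h^G|, while the degrees have squared norm |G|; by
   Cauchy-Schwarz, sum_chi chi(1) |chi(h)| <= |G| / sqrt |h^G|, and every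
   h in H^# has |h^G| >= |C_min|.  For the lower bound, pick g in C_min :&: H
   and pair the vector (sum_{h in H^#} chi(h))_chi with the column of g: this
   yields sum_{h in H^# :&: g^G} |C_G(h)| >= |C_G(g)| = |G| / |C_min|. *)

Section CharacterTableColumns.

Variables (gT : finGroupType) (G : {group gT}).

Lemma card_class_cent1 x : (#|(x ^: G)%g| * #|'C_G[x]%g|)%N = #|G|.
Proof. by rewrite -index_cent1 mulnC Lagrange ?subsetIl. Qed.

Lemma card_cent1_divG x :
  #|'C_G[x]%g|%:R / #|G|%:R = (#|(x ^: G)%g|%:R)^-1 :> algC.
Proof.
rewrite -(card_class_cent1 x) natrM invfM mulrCA mulfV ?mulr1 //.
by rewrite pnatr_eq0 -lt0n cardG_gt0.
Qed.

Lemma sum_irr_normK x : x \in G -> \sum_i `|'chi[G]_i x| ^+ 2 = #|'C_G[x]%g|%:R.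
Proof.
move=> Gx; have := second_orthogonality_relation x Gx.
by rewrite class_refl mulr1n => <-; apply: eq_bigr => i _; rewrite normCK.
Qed.

Lemma sum_irr1_mul_norm_le x : x \in G ->
  \sum_i 'chi[G]_i 1%g * `|'chi_i x| <= #|G|%:R / sqrtC #|(x ^: G)%g|%:R.
Proof.
move=> Gx; set c : algC := #|(x ^: G)%g|%:R; set s := sqrtC c.
have c_gt0 : 0 < c by rewrite ltr0n (cardD1 x) class_refl.
have s_gt0 : 0 < s by rewrite sqrtC_gt0.
(* AM-GM with the weight s = sqrt |x^G| is Cauchy-Schwarz for the degrees
   and the column of x. *)
have AM_GM i : s * ('chi[G]_i 1%g * `|'chi_i x|) *+ 2
    <= 'chi_i 1%g ^+ 2 + c * `|'chi_i x| ^+ 2.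
  rewrite mulrCA -[c]sqrtCK -exprMn; apply: real_leif_mean_square_scaled.
    exact/gtr0_real/irr1_gt0.
  by rewrite realM ?normr_real ?gtr0_real.
have {AM_GM}: s * (\sum_i 'chi[G]_i 1%g * `|'chi_i x|) *+ 2 <= #|G|%:R *+ 2.
  rewrite mulr_sumr -sumrMnl; apply: le_trans (ler_sum _ (fun i _ => AM_GM i)) _.
  rewrite big_split /= irr_sum_square -mulr_sumr sum_irr_normK //.
  by rewrite -natrM card_class_cent1 mulr2n.
by rewrite lerMn2r /= mulrC ler_pdivlMr.
Qed.

Lemma sum_irr1_mul_norm_sum_le (A : {set gT}) : A \subset G ->
  \sum_i 'chi[G]_i 1%g * `|\sum_(h in A) 'chi_i h|
    <= \sum_(h in A) #|G|%:R / sqrtC #|(h ^: G)%g|%:R.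
Proof.
move=> sAG; apply: le_trans (_ : _ <= \sum_i \sum_(h in A)
    'chi[G]_i 1%g * `|'chi_i h|) _.
  apply: ler_sum => i _; rewrite -mulr_sumr ler_wpM2l ?ler_norm_sum //.
  exact/ltW/irr1_gt0.
rewrite exchange_big /=; apply: ler_sum => h Ah.
exact/sum_irr1_mul_norm_le/(subsetP sAG).
Qed.

Lemma cent1_le_sum_irr1_mul_norm_sum (A : {set gT}) g : A \subset G -> g \in A ->
  #|'C_G[g]%g|%:R <= \sum_i 'chi[G]_i 1%g * `|\sum_(h in A) 'chi_i h|.
Proof.
move=> sAG Ag; have Gg := subsetP sAG g Ag.
have column_dot : \sum_i ('chi[G]_i g)^* * \sum_(h in A) 'chi_i h
    = \sum_(h in A) #|'C_G[h]%g|%:R *+ (h \in (g ^: G)%g).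
  under eq_bigr do rewrite mulr_sumr.
  rewrite exchange_big /=; apply: eq_bigr => h _.
  by rewrite -second_orthogonality_relation //; apply: eq_bigr => i _; rewrite mulrC.
apply: le_trans (_ : _ <= `|\sum_i ('chi[G]_i g)^* * \sum_(h in A) 'chi_i h|) _.
  rewrite column_dot ger0_norm; last by apply: sumr_ge0 => h _; apply: mulrn_wge0.
  rewrite (bigD1 g) //= class_refl mulr1n lerDl.
  by apply: sumr_ge0 => h _; apply: mulrn_wge0.
apply: le_trans (ler_norm_sum _ _ _) _; apply: ler_sum => i _.
rewrite normrM norm_conjC ler_wpM2r //.
exact/char1_ge_norm/irr_char.
Qed.

End CharacterTableColumns.

Theorem corollary1 (gT : finGroupType) (G H : {group gT}) (Cmin : {set gT}) :
  H \subset G -> H :!=: 1%g ->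
  Cmin \in classes G -> Cmin != 1%g -> Cmin :&: H != set0 ->
  (forall C : {set gT}, C \in classes G -> C != 1%g -> C :&: H != set0 ->
     (#|Cmin| <= #|C|)%N) ->
  (#|H|%:R)^-1 * (#|Cmin|%:R)^-1 < DH G H /\
  DH G H <= (#|H|%:R - 1) * (sqrtC (#|Cmin|%:R))^-1.
Proof.
move=> sHG ntH CminG ntCmin /set0Pn[g /setIP[Cmin_g Hg]] Cmin_min.
have sH1G : (H^# \subset G)%g by rewrite subDset subsetU ?sHG ?orbT.
have defCmin : Cmin = (g ^: G)%g.
  by have /imsetP[x _ defC] := CminG; rewrite defC; apply/esym/class_eqP; rewrite -defC.
have H1g : g \in (H^#)%g.
  by rewrite !inE Hg andbT; apply: contraNneq ntCmin => g1; rewrite defCmin g1 class1G.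
have G_gt0 : (0 : algC) < #|G|%:R by rewrite ltr0n cardG_gt0.
have Cmin_gt0 : (0 : algC) < #|Cmin|%:R by rewrite ltr0n (cardD1 g) Cmin_g.
have Cmin_le h : h \in (H^#)%g -> (#|Cmin| <= #|(h ^: G)%g|)%N.
  case/setD1P=> h_neq1 Hh; apply: Cmin_min; first exact/mem_classes/(subsetP sHG).
    by rewrite classG_eq1.
  by apply/set0Pn; exists h; rewrite inE class_refl.
split.
  apply: (@lt_le_trans _ _ (#|Cmin|%:R)^-1).
    by rewrite gtr_pMl ?invr_gt0 // invf_lt1 ?ltr0n ?cardG_gt0 // ltr1n cardG_gt1.
  rewrite defCmin -card_cent1_divG mulrC /DH ler_pM2l ?invr_gt0 //.
  exact: cent1_le_sum_irr1_mul_norm_sum.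
rewrite /DH ler_pdivrMl //; apply: le_trans (sum_irr1_mul_norm_sum_le sH1G) _.
apply: le_trans (_ : _ <= \sum_(h in (H^#)%g) #|G|%:R / sqrtC #|Cmin|%:R) _.
  apply: ler_sum => h H1h; rewrite ler_pM2l // lef_pV2 ?posrE ?sqrtC_gt0 //.
    by rewrite ler_sqrtC ?nnegrE // ler_nat Cmin_le.
  by rewrite ltr0n (cardD1 h) class_refl.
rewrite sumr_const (cardsD1 1%g H) group1 natrD /= [1 + _]addrC addrK.
by rewrite [X in _ <= X]mulrCA [X in _ <= X]mulr_natl.
Qed.
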